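(* Let $V$ and $W$ be calibrated $R$-supermodules and regard $V\oplus W$ as a calibrated $R$-supermodule via $(V\oplus W)_{\mathfrak a}=V_{\mathfrak a}\oplus W_{\mathfrak a}$ and $(V\oplus W)_{\mathfrak c}=V_{\mathfrak c}\oplus W_{\mathfrak c}$. Then for every $d\ge 0$ the map \[\bigoplus_{d_1+d_2=d}(\tilde\Gamma^{d_1}V)\otimes(\tilde\Gamma^{d_2}W)\longrightarrow\tilde\Gamma^d(V\oplus W),\qquad y\otimes y'\mapsto y*y',\] is an isomorphism of $R$-supermodules.
   Context: Let $R$ be a principal ideal domain of characteristic $0$. Supermodules are $\mathbb Z/2$-graded and $|v|$ denotes the parity of a homogeneous element $v$. A calibrated $R$-supermodule is a free $R$-supermodule $V=V_{\bar0}\oplus V_{\bar1}$ of finite rank together with a decomposition $V_{\bar 0}=V_{\mathfrak a}\oplus V_{\mathfrak c}$ into free $R$-submodules. Fix bases $B_{\mathfrak a},B_{\mathfrak c},B_{\bar1}$ of $V_{\mathfrak a},V_{\mathfrak c},V_{\bar1}$, put $B_{\bar0}=B_{\mathfrak a}\sqcup B_{\mathfrak c}$, $B=B_{\bar0}\sqcup B_{\bar1}$, and fix a total order on $B$. The symmetric group $\mathfrak S_d$ acts on the right on $V^{\otimes d}$ by $(v_1\otimes\cdots\otimes v_d)^\sigma=(-1)^{\langle\sigma;\mathbf v\rangle}v_{\sigma1}\otimes\cdots\otimes v_{\sigma d}$ for homogeneous $v_k$, where $\langle\sigma;\mathbf v\rangle$ is the number of pairs $k<l$ with $\sigma^{-1}k>\sigma^{-1}l$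 and $|v_k|=|v_l|=\bar1$; $\Gamma^dV$ is the submodule of $\mathfrak S_d$-invariants. $\mathfrak S_d$ acts on $B^d$ by $(b_1\cdots b_d)\sigma=b_{\sigma1}\cdots b_{\sigma d}$ and $\mathbf b\sim\mathbf b'$ means they lie in one orbit. For $\mathbf b=b_1\cdots b_d\in B^d$ let $\langle\mathbf b\rangle$ be the number of pairs $k<l$ with $b_k,b_l\in B_{\bar1}$ and $b_k>b_l$, let $[\mathbf b:b]=\#\{k:b_k=b\}$ and $[\mathbf b]^!_{\mathfrak c}=\prod_{b\in B_{\mathfrak c}}[\mathbf b:b]!$. Let $\mathrm{Seq}(B,d)$ be the set of $\mathbf b\in B^d$ such that $b_k=b_l$ for some $k\ne l$ only if $b_k\in B_{\bar0}$. For $\mathbf b\in\mathrm{Seq}(B,d)$ put $x_{\mathbf b}=\sum_{\mathbf b'}(-1)^{\langle\mathbf b\rangle+\langle\mathbf b'\rangle}b'_1\otimes\cdots\otimes b'_d$ (sum over the distinct $\mathbf b'\sim\mathbf b$) and $y_{\mathbf b}=[\mathbf b]^!_{\mathfrak c}\,x_{\mathbf b}$. The modified divided power is $\tilde\Gamma^dV=\mathrm{span}_R\{y_{\mathbf b}:\mathbf b\in\mathrm{Seq}(B,d)\}\subseteq\Gamma^dV$. For $w_1\in U^{\otimes c}$, $w_2\in U^{\otimes(d-c)}$ ($U$ any supermodule) the star product is $w_1*w_2=\sum_\sigma(w_1\otimes w_2)^\sigma$, summed over the shortest coset representatives $\sigma$ of $(\mathfrak S_c\times\mathfrak S_{d-c})\backslash\mathfrak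 S_d$; here $V,W\subseteq V\oplus W$ so that $\tilde\Gamma^{d_1}V\otimes\tilde\Gamma^{d_2}W\subseteq (V\oplus W)^{\otimes d_1}\otimes(V\oplus W)^{\otimes d_2}$. *)

From HB Require Import structures.
From mathcomp Require Import all_boot all_order all_algebra all_fingroup.
Set Implicit Arguments. Unset Strict Implicit. Unset Printing Implicit Defensive.
Import GRing.Theory.
Local Open Scope ring_scope.

Definition is_ideal (R : comNzRingType) (I : R -> Prop) :=
  [/\ I 0, (forall x y, I x -> I y -> I (x + y)) & (forall a x, I x -> I (a * x))].

Definition principal_ideal_domain (R : idomainType) :=
  forall I : R -> Prop, is_ideal I -> exists g : R, forall x, I x <-> exists a, x = a * g.

Definition char0 (R : nzRingType) := forall n : nat, (n%:R == 0 :> R) = (n == 0)%N.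

(* Calibrated bases: each basis vector is in B_a, B_c (even) or B_1 (odd).  *)
(* A calibrated R-supermodule with fixed bases is modelled by its basis     *)
(* B (a finType), a kind function, and a total order given by an injective *)
(* rank  rk : B -> nat  (b > b'  iff  rk b > rk b').                        *)

Inductive ckind := KA | KC | KOdd.
Definition is_odd (k : ckind) : bool := if k is KOdd then true else false.
Definition is_c (k : ckind) : bool := if k is KC then true else false.

(* basis of V^{⊗d}: sequences b_1 ... b_d *)
Notation Seqs B d := {ffun 'I_d -> B}.
(* V^{⊗d}, as coordinate functions on the basis B^d *)
Notation tens R B d := {ffun Seqs B d -> R}.

Section Tensors.
Variable B : finType.
Variable kind : B -> ckind.
Variable rk : B -> nat.
Variable d : nat.

Section WithRing.
Variable R : comNzRingType.

Definition btens (b : Seqs B d) : tens R B d := [ffun s => (s == b)%:R].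

Definition perm_sign_exp (s : 'S_d) (b : Seqs B d) : nat :=
  #|[set p : 'I_d * 'I_d | [&& (p.1 < p.2)%N, ((s^-1)%g p.2 < (s^-1)%g p.1)%N,
                              is_odd (kind (b p.1)) & is_odd (kind (b p.2))]]|.

(* the right action of S_d on V^{⊗d}:
   (b_1⊗...⊗b_d)^s = (-1)^{<s;b>} b_{s1}⊗...⊗b_{sd}, extended linearly *)
Definition tact (s : 'S_d) (f : tens R B d) : tens R B d :=
  [ffun u => \sum_(b : Seqs B d)
       f b * ((-1) ^+ perm_sign_exp s b * btens [ffun k => b (s k)] u)].

End WithRing.

Definition odd_inv (b : Seqs B d) : nat :=
  #|[set p : 'I_d * 'I_d | [&& (p.1 < p.2)%N, is_odd (kind (b p.1)),
                              is_odd (kind (b p.2)) & (rk (b p.2) < rk (b p.1))%N]]|.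

Definition seq_sim (b b' : Seqs B d) : bool :=
  [exists s : 'S_d, b' == [ffun k => b (s k)]].

Definition mult (b : Seqs B d) (b0 : B) : nat := #|[set k | b k == b0]|.

Definition cfact (b : Seqs B d) : nat :=
  (\prod_(b0 | is_c (kind b0)) (mult b b0)`!)%N.

Definition seqok (b : Seqs B d) : bool :=
  [forall k, forall l, ((k != l) && (b k == b l)) ==> ~~ is_odd (kind (b k))].

Section WithRing2.
Variable R : comNzRingType.

Definition xb (b : Seqs B d) : tens R B d :=
  [ffun u => \sum_(b' | seq_sim b b') (-1) ^+ (odd_inv b + odd_inv b') * (u == b')%:R].

Definition yb (b : Seqs B d) : tens R B d := [ffun u => (cfact b)%:R * xb b u].

Definition in_mGamma (f : tens R B d) : Prop :=
  exists c : Seqs B d -> R, f = [ffun u => \sum_(b | seqok b) c b * yb b u].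

End WithRing2.

Definition seq_parity (b : Seqs B d) : bool := odd #|[set k | is_odd (kind (b k))]|.
Definition homog (R : comNzRingType) (p : bool) (f : tens R B d) : Prop :=
  forall u, f u != 0 -> seq_parity u = p.

Definition young (c : nat) (h : 'S_d) : bool := [forall k, (h k < c)%N == (k < c)%N].

Definition perm_length (f : 'I_d -> 'I_d) : nat :=
  #|[set p : 'I_d * 'I_d | (p.1 < p.2)%N && (f p.2 < f p.1)%N]|.

(* shortest representatives of the right cosets (S_c x S_{d-c}) s, where
   (h s)(k) = h (s k) (the composition for which (v^s)^t = v^(s t)) *)
Definition shortest_rep (c : nat) (s : 'S_d) : bool :=
  [forall h : 'S_d, young c h ==> (perm_length s <= perm_length (fun k => h (s k)))%N].

Section WithRing3.
Variable R : comNzRingType.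

(* star product: w is w1 ⊗ w2 in U^{⊗d}, with w1 occupying the first c factors *)
Definition star (c : nat) (w : tens R B d) : tens R B d :=
  [ffun u => \sum_(s : 'S_d | shortest_rep c s) tact s w u].

End WithRing3.
End Tensors.
Arguments btens {B d R} b.
Arguments xb {B} kind rk {d R} b.
Arguments yb {B} kind rk {d R} b.

Definition sum_kind (BV BW : finType) (kV : BV -> ckind) (kW : BW -> ckind)
  (u : BV + BW) : ckind := match u with inl b => kV b | inr b => kW b end.

Definition dsplit (d : nat) (d1 : 'I_d.+1) : (d1 + (d - d1) = d)%N :=
  subnKC (ltnSE (ltn_ord d1)).

Definition concat (BV BW : finType) (d : nat) (d1 : 'I_d.+1)
  (b : Seqs BV d1) (b' : Seqs BW (d - d1)) : Seqs (BV + BW)%type d :=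
  [ffun k => match split (cast_ord (esym (dsplit d1)) k) with
             | inl i => inl (b i) | inr j => inr (b' j) end].

(* V^{⊗d1} ⊗ W^{⊗d2}, with basis B_V^{d1} x B_W^{d2} *)
Notation tens2 R BV BW d1 d2 := {ffun (Seqs BV d1 * Seqs BW d2)%type -> R}.

(* ~Gamma^{d1} V ⊗ ~Gamma^{d2} W, as the submodule of V^{⊗d1} ⊗ W^{⊗d2}
   spanned by the y_b ⊗ y_b' *)
Definition in_mGamma2 (R : comNzRingType) (BV BW : finType)
  (kV : BV -> ckind) (kW : BW -> ckind) (rV : BV -> nat) (rW : BW -> nat)
  (d1 d2 : nat) (T : tens2 R BV BW d1 d2) : Prop :=
  exists c : Seqs BV d1 -> Seqs BW d2 -> R,
    T = [ffun p => \sum_(b | seqok kV b) \sum_(b' | seqok kW b')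
                     c b b' * (yb kV rV b p.1 * yb kW rW b' p.2)].

Definition homog2 (R : comNzRingType) (BV BW : finType)
  (kV : BV -> ckind) (kW : BW -> ckind) (d1 d2 : nat) (p : bool)
  (T : tens2 R BV BW d1 d2) : Prop :=
  forall q, T q != 0 -> seq_parity kV q.1 (+) seq_parity kW q.2 = p.

(* the inclusion V^{⊗d1} ⊗ W^{⊗d2} -> (V⊕W)^{⊗d1} ⊗ (V⊕W)^{⊗(d-d1)} = (V⊕W)^{⊗d} *)
Definition emb (R : comNzRingType) (BV BW : finType) (d : nat) (d1 : 'I_d.+1)
  (T : tens2 R BV BW d1 (d - d1)) : tens R (BV + BW)%type d :=
  [ffun u => \sum_(q : (Seqs BV d1 * Seqs BW (d - d1))%type)
               T q * (u == concat q.1 q.2)%:R].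

(* the map  ⊕_{d1+d2=d} (~Gamma^{d1} V) ⊗ (~Gamma^{d2} W) -> (V⊕W)^{⊗d},
   (T_{d1})_{d1} |-> sum_{d1} star_{d1} (T_{d1}),  i.e.  y ⊗ y' |-> y * y' *)
Definition Phi (R : comNzRingType) (BV BW : finType) (kU : BV + BW -> ckind)
  (d : nat) (F : forall d1 : 'I_d.+1, tens2 R BV BW d1 (d - d1)) :
  tens R (BV + BW)%type d :=
  [ffun u => \sum_(d1 : 'I_d.+1) star kU d1 (emb (F d1)) u].

(* The coefficient functions in ~Gamma^d are those supported in Seq(B,d), whose twist
   by (-1)^<b> is constant on S_d-orbits, and whose coefficient at b is divisible by
   [b]^!_c; likewise for ~Gamma^d1 V (x) ~Gamma^d2 W.  Every basis sequence of V (+) W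
   is uniquely b b' sigma with b over B_V, b' over B_W and sigma a shortest coset
   representative, and the star product sends the coefficient at (b, b') to +-1 times
   the coefficient at b b' sigma.  So the map is a bijection of coefficient functions,
   and the three conditions match: Seq and [.]^!_c are multiplicative under
   concatenation, <b b'> = <b> + <b'> when B_V precedes B_W, and changing the order of
   the basis changes (-1)^<.> by a factor that is constant on orbits inside Seq. *)

From HB Require Import structures.
From mathcomp Require Import all_boot all_order all_algebra all_fingroup.
From mathcomp Require Import ring.
Set Implicit Arguments. Unset Strict Implicit. Unset Printing Implicit Defensive.
Import GRing.Theory.
Local Open Scope ring_scope.

Lemma cards_sum_nat (T : finType) (P : pred T) : #|[set x | P x]| = (\sum_x P x)%N.
Proof. by rewrite -sum1dep_card big_mkcond. Qed.

Lemma even_sum (I : finType) (F : I -> nat) :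
  (forall i, ~~ odd (F i)) -> ~~ odd (\sum_i F i).
Proof. by move=> evF; elim/big_ind: _ => // x y; rewrite oddD => /negbTE-> /negbTE->. Qed.

Lemma even_pair_sum n (G : 'I_n -> 'I_n -> nat) :
  (forall k, ~~ odd (G k k)) -> (forall k l : 'I_n, (k < l)%N -> ~~ odd (G k l + G l k)) ->
  ~~ odd (\sum_k \sum_l G k l).
Proof.
move=> even_diag even_sym.
have split_diag k l :
    G k l = ((k < l) * G k l + (l < k) * G k l + (k == l :> nat) * G k l)%N.
  by case: ltngtP; rewrite ?mul1n ?mul0n ?addn0.
under eq_bigr do under eq_bigr do rewrite split_diag.
under eq_bigr do rewrite !big_split /=.
rewrite !big_split /= [X in (_ + X + _)%N]exchange_big -big_split /=.
under eq_bigr do rewrite -big_split /=.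
have off_diag : ~~ odd (\sum_(k < n) \sum_(l < n) ((k < l) * G k l + (k < l) * G l k)).
  apply: even_sum => k; apply: even_sum => l; rewrite -mulnDr.
  by case: ltnP => kl; rewrite ?mul1n ?mul0n ?even_sym.
have diag : ~~ odd (\sum_(k < n) \sum_(l < n) (k == l :> nat) * G k l).
  apply: even_sum => k; apply: even_sum => l.
  by case: eqP => [/val_inj ->|]; rewrite ?mul1n ?mul0n.
by rewrite oddD (negbTE off_diag) (negbTE diag).
Qed.

Section ClassSpan.
Variables (X : finType) (Y : eqType) (cls : X -> Y) (R : comNzRingType).
Variables (ok : pred X) (m e : X -> nat).
Hypotheses (ok_cls : forall u v, cls u = cls v -> ok u = ok v)
           (m_cls : forall u v, cls u = cls v -> m u = m v).

(* For X = B^d, cls = content, m = [.]^!_c and e = <.>, class_vec b is y_b. *)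
Definition class_vec (b u : X) : R :=
  if cls b == cls u then (m u)%:R * (-1) ^+ (e b + e u) else 0.

Definition class_span (f : X -> R) : Prop :=
  exists c : X -> R, forall u, f u = \sum_(b | ok b) c b * class_vec b u.

Definition class_rep (u : X) : X := [arg min_(v < u | cls v == cls u) enum_rank v].

Lemma class_rep_cls u : cls (class_rep u) = cls u.
Proof. by rewrite /class_rep; case: arg_minnP => // v /eqP. Qed.

Lemma class_rep_eq u v : cls u = cls v -> class_rep u = class_rep v.
Proof.
move=> eq_uv; rewrite /class_rep.
case: arg_minnP => // x /eqP cls_x min_x; case: arg_minnP => // y /eqP cls_y min_y.
apply/enum_rank_inj/val_inj/eqP; rewrite eqn_leq min_x ?min_y //.
  by rewrite cls_x eq_uv.
by rewrite cls_y eq_uv.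
Qed.

Lemma class_spanP f : class_span f <->
  [/\ forall u, ~~ ok u -> f u = 0,
      forall u v, cls u = cls v -> f u * (-1) ^+ e u = f v * (-1) ^+ e v
    & exists g : X -> R, forall u, f u = (m u)%:R * g u].
Proof.
have vec0 b u : ok b -> ~~ ok u -> class_vec b u = 0.
  move=> ok_b not_ok; rewrite /class_vec; case: eqP => // /ok_cls eq_ok.
  by move: not_ok; rewrite -eq_ok ok_b.
have vec_sign b u : class_vec b u * (-1) ^+ e u =
    if cls b == cls u then (m b)%:R * (-1) ^+ e b else 0.
  rewrite /class_vec; case: eqP => [/m_cls ->|]; last by rewrite mul0r.
  by rewrite exprD -!mulrA -expr2 sqrr_sign mulr1.
split=> [[c span_f]|[supp_f sign_f [g div_f]]].
  split.
  - by move=> u not_ok; rewrite span_f big1 // => b ok_b; rewrite vec0 ?mulr0.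
  - move=> u v eq_uv; rewrite !span_f !mulr_suml; apply: eq_bigr => b _.
    by rewrite -!mulrA !vec_sign eq_uv.
  - exists (fun u => \sum_(b | ok b) c b * if cls b == cls u then (-1) ^+ (e b + e u) else 0).
    move=> u; rewrite span_f mulr_sumr; apply: eq_bigr => b _; rewrite /class_vec mulrCA.
    by case: eqP; rewrite ?mulr0.
exists (fun b => if b == class_rep b then g b else 0) => u.
case: (boolP (ok u)) => [ok_u|not_ok]; last first.
  by rewrite supp_f // big1 // => b ok_b; rewrite vec0 ?mulr0.
rewrite (bigD1 (class_rep u)) /=; last by rewrite (ok_cls (class_rep_cls u)).
rewrite big1 ?addr0 => [|b /andP[_ ne_b]]; last first.
  case: eqP => [eq_b|]; last by rewrite mul0r.
  rewrite /class_vec; case: eqP => [/class_rep_eq eq_rep|]; last by rewrite mulr0.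
  by case/eqP: ne_b; rewrite eq_b eq_rep.
rewrite (class_rep_eq (class_rep_cls u)) eqxx /class_vec class_rep_cls eqxx.
have -> : f u = f u * (-1) ^+ e u * (-1) ^+ e u by rewrite -mulrA -expr2 sqrr_sign mulr1.
rewrite (sign_f _ _ (esym (class_rep_cls u))).
by rewrite div_f (m_cls (class_rep_cls u)) exprD [_ * g _]mulrC !mulrA.
Qed.

End ClassSpan.

Section Positions.
Variables (B : finType) (d : nat).
Implicit Types (b w u : Seqs B d) (s : 'S_d).

Definition occ b (P : pred B) : nat := #|[set k | P (b k)]|.

Lemma occ_perm b s P : occ [ffun k => b (s k)] P = occ b P.
Proof.
rewrite /occ !cards_sum_nat (reindex_inj (@perm_inj _ s^-1)).
by apply: eq_bigr => k _; rewrite ffunE permKV.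
Qed.

Lemma occ_sim b b' P : seq_sim b b' -> occ b P = occ b' P.
Proof. by case/existsP => s /eqP ->; rewrite occ_perm. Qed.

Definition content b : {ffun B -> nat} := [ffun x => mult b x].

Lemma content_perm b s : content [ffun k => b (s k)] = content b.
Proof. by apply/ffunP => x; rewrite !ffunE; apply: (occ_perm b s (pred1 x)). Qed.

Lemma seq_simE b b' : seq_sim b b' = (content b == content b').
Proof.
apply/existsP/eqP => [[s /eqP ->]|eq_content]; first by rewrite content_perm.
have count_tuple w x : count_mem x [tuple w i | i < d] = content w x.
  rewrite ffunE /mult cards_sum_nat -sum1_count /= big_map.
  by rewrite big_enum_cond /= big_mkcond.
have /tuple_permP[s /val_inj eq_s] : perm_eq [tuple b' i | i < d] [tuple b i | i < d].
  by apply/allP => x _; rewrite /= !count_tuple eq_content.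
exists s; apply/eqP/ffunP => k.
by have := congr1 (fun t => tnth t k) eq_s; rewrite !tnth_mktuple ffunE.
Qed.

Lemma seq_parity_perm (kind : B -> ckind) b s :
  seq_parity kind [ffun k => b (s k)] = seq_parity kind b.
Proof. by rewrite /seq_parity -!/(occ _ (fun x => is_odd (kind x))) occ_perm. Qed.

Lemma seqokE (kind : B -> ckind) b :
  seqok kind b = [forall x, is_odd (kind x) ==> (content b x <= 1)%N].
Proof.
apply/forallP/forallP => [ok_b x|ok_b k]; rewrite ?ffunE.
  apply/implyP => odd_x; apply/card_le1_eqP => k l; rewrite !inE => /eqP bk /eqP bl.
  case: (eqVneq k l) => // kl.
  by have /forallP/(_ l)/implyP := ok_b k; rewrite kl bk bl eqxx odd_x => /(_ isT).
apply/forallP => l; apply/implyP => /andP[kl /eqP bkl]; apply/negP => odd_bk.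
have /implyP/(_ odd_bk) := ok_b (b k); rewrite ffunE leqNgt => /negP; apply.
by apply/card_gt1P; exists k, l; rewrite !inE bkl eqxx.
Qed.

Lemma seqok_content (kind : B -> ckind) b b' :
  content b = content b' -> seqok kind b = seqok kind b'.
Proof. by rewrite !seqokE => ->. Qed.

Lemma cfact_content (kind : B -> ckind) b b' :
  content b = content b' -> cfact kind b = cfact kind b'.
Proof.
move=> eq_content; apply: eq_bigr => x _.
by have := congr1 (fun f : {ffun B -> nat} => f x) eq_content; rewrite !ffunE => ->.
Qed.

Lemma tactE (kind : B -> ckind) (R : comNzRingType) s (f : tens R B d) u :
  tact kind s f u =
  f [ffun k => u ((s^-1)%g k)] * (-1) ^+ perm_sign_exp kind s [ffun k => u ((s^-1)%g k)].
Proof.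
rewrite ffunE (bigD1 [ffun k => u ((s^-1)%g k)]) //= big1 ?addr0.
  have -> : [ffun k => [ffun k0 => u ((s^-1)%g k0)] (s k)] = u.
    by apply/ffunP => k; rewrite !ffunE permK.
  by rewrite ffunE eqxx mulr1.
move=> b ne_b; rewrite ffunE; case: eqP => [eq_u|]; last by rewrite !mulr0.
by case/eqP: ne_b; apply/ffunP => k; rewrite eq_u !ffunE permKV.
Qed.

Variables (kind : B -> ckind) (rk : B -> nat).

Lemma odd_invE w : odd_inv kind rk w = (\sum_(k : 'I_d) \sum_(l : 'I_d)
  [&& (k < l)%N, is_odd (kind (w k)), is_odd (kind (w l)) & (rk (w l) < rk (w k))%N])%N.
Proof. by rewrite /odd_inv cards_sum_nat pair_bigA. Qed.

Lemma odd_inv_perm_sign (R : pzRingType) w s : injective rk -> seqok kind w ->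
  (-1) ^+ odd_inv kind rk [ffun k => w (s k)] =
  (-1) ^+ odd_inv kind rk w * (-1) ^+ perm_sign_exp kind s w :> R.
Proof.
move=> rk_inj ok_w; rewrite -signr_odd -[in RHS]signr_odd -[X in _ * X]signr_odd -signr_addb.
congr (_ ^+ _).
suff : ~~ odd (odd_inv kind rk [ffun k => w (s k)] + odd_inv kind rk w
               + perm_sign_exp kind s w).
  by rewrite !oddD; do 3 case: (odd _).
set O := fun k => is_odd (kind (w k)).
have reindexed : odd_inv kind rk [ffun k => w (s k)] = (\sum_(k : 'I_d) \sum_(l : 'I_d)
    [&& ((s^-1)%g k < (s^-1)%g l)%N, O k, O l & (rk (w l) < rk (w k))%N])%N.
  rewrite odd_invE (reindex_inj (@perm_inj _ s^-1)); apply: eq_bigr => k _.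
  by rewrite (reindex_inj (@perm_inj _ s^-1)); apply: eq_bigr => l _; rewrite !ffunE !permKV.
have pse_sum : perm_sign_exp kind s w = (\sum_(k : 'I_d) \sum_(l : 'I_d)
    [&& (k < l)%N, ((s^-1)%g l < (s^-1)%g k)%N, O k & O l])%N.
  by rewrite /perm_sign_exp cards_sum_nat pair_bigA.
rewrite reindexed odd_invE pse_sum -!big_split /=.
under eq_bigr do rewrite -!big_split /=.
apply: even_pair_sum => [k|k l kl]; first by rewrite !ltnn.
rewrite kl (leq_gtF (ltnW kl)) /= /O.
case Ok : (is_odd (kind (w k))); case Ol : (is_odd (kind (w l))); rewrite /= ?andbF //.
have rk_ne : rk (w k) != rk (w l).
  apply/eqP => /rk_inj eq_w; have /forallP/(_ l) := forallP ok_w k.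
  by rewrite neq_ltn kl eq_w eqxx /= -eq_w Ok.
have s_ne : (s^-1)%g k != (s^-1)%g l by rewrite (inj_eq perm_inj) neq_ltn kl.
move: rk_ne s_ne; rewrite -!val_eqE /=.
by case: (ltngtP (rk (w l)) (rk (w k))); case: (ltngtP ((s^-1)%g l : nat) ((s^-1)%g k)).
Qed.

End Positions.

Lemma mulr_sign_transfer (R : pzRingType) (a a' : R) (m m' n n' : nat) :
  a * (-1) ^+ m = a' * (-1) ^+ m' ->
  (-1) ^+ m * (-1) ^+ n = (-1) ^+ m' * (-1) ^+ n' :> R ->
  a * (-1) ^+ n = a' * (-1) ^+ n'.
Proof.
have sign_sq k : (-1) ^+ k * (-1) ^+ k = 1 :> R by rewrite -expr2 sqrr_sign.
move=> eq_a eq_sign.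
have -> : a * (-1) ^+ n = a * (-1) ^+ m * ((-1) ^+ m * (-1) ^+ n).
  by rewrite mulrA -(mulrA a) sign_sq mulr1.
by rewrite eq_a eq_sign mulrA -(mulrA a') sign_sq mulr1.
Qed.

Section SignChanges.
Variables (B : finType) (kind : B -> ckind) (d : nat) (R : comPzRingType).
Implicit Types (w : Seqs B d) (s : 'S_d).

Lemma odd_inv_rank_change (rk rk' : B -> nat) w w' :
  injective rk -> injective rk' -> seqok kind w -> seq_sim w w' ->
  (-1) ^+ odd_inv kind rk w * (-1) ^+ odd_inv kind rk' w =
  (-1) ^+ odd_inv kind rk w' * (-1) ^+ odd_inv kind rk' w' :> R.
Proof.
move=> rk_inj rk'_inj ok_w /existsP[s /eqP ->].
by rewrite !odd_inv_perm_sign // mulrACA -expr2 sqrr_sign mulr1.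
Qed.

Lemma twisted_permE (rk : B -> nat) w s (x y : R) : injective rk -> seqok kind w ->
  x * (-1) ^+ odd_inv kind rk [ffun k => w (s k)] = y * (-1) ^+ odd_inv kind rk w <->
  x = (-1) ^+ perm_sign_exp kind s w * y.
Proof.
move=> rk_inj ok_w; rewrite odd_inv_perm_sign //.
set A := (-1) ^+ odd_inv kind rk w; set P := (-1) ^+ perm_sign_exp kind s w.
split=> [eq_xy|->]; last by rewrite [A * P]mulrC mulrACA -expr2 sqrr_sign mul1r.
rewrite -[x](signrMK (perm_sign_exp kind s w)) -/P; congr (_ * _).
apply: (@lreg_sign R (odd_inv kind rk w)); rewrite -/A.
by rewrite mulrA mulrC eq_xy mulrC.
Qed.

Lemma twisted_rank_change (rk rk' : B -> nat) w w' (a a' : R) :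
  injective rk -> injective rk' -> content w = content w' ->
  (~~ seqok kind w -> a = 0) -> (~~ seqok kind w' -> a' = 0) ->
  a * (-1) ^+ odd_inv kind rk w = a' * (-1) ^+ odd_inv kind rk w' ->
  a * (-1) ^+ odd_inv kind rk' w = a' * (-1) ^+ odd_inv kind rk' w'.
Proof.
move=> rk_inj rk'_inj eq_content a0 a'0; case ok_w: (seqok kind w); last first.
  have ok_w' : seqok kind w' = false by rewrite -(seqok_content kind eq_content).
  by rewrite a0 ?a'0 ?ok_w ?ok_w' // !mul0r.
move/mulr_sign_transfer; apply; apply: odd_inv_rank_change => //.
by rewrite seq_simE eq_content.
Qed.

End SignChanges.

Section ModifiedDividedPower.
Variables (B : finType) (kind : B -> ckind) (rk : B -> nat) (d : nat) (R : comNzRingType).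
Implicit Types (b u : Seqs B d).

Lemma yb_class_vec b u :
  yb kind rk b u = class_vec (@content B d) R (@cfact _ kind d) (@odd_inv _ kind rk d) b u.
Proof.
rewrite !ffunE /class_vec -seq_simE; case: ifP => [sim_bu|not_sim]; last first.
  rewrite big1 ?mulr0 // => b' sim_b'; case: eqP => [eq_u|]; last by rewrite mulr0.
  by rewrite eq_u sim_b' in not_sim.
rewrite (bigD1 u) //= eqxx mulr1 big1 ?addr0 => [|b' /andP[_ ne_b']]; last first.
  by rewrite eq_sym (negbTE ne_b') mulr0.
by move: sim_bu; rewrite seq_simE => /eqP/(cfact_content kind) ->.
Qed.

Lemma in_mGammaP (f : tens R B d) : in_mGamma kind rk f <->
  [/\ forall u, ~~ seqok kind u -> f u = 0,
      forall u v, content u = content v ->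
        f u * (-1) ^+ odd_inv kind rk u = f v * (-1) ^+ odd_inv kind rk v
    & exists g : Seqs B d -> R, forall u, f u = (cfact kind u)%:R * g u].
Proof.
have spanP := class_spanP (cls := @content B d) (@odd_inv _ kind rk d)
  (@seqok_content B d kind) (@cfact_content B d kind) f.
split=> [[c def_f]|/spanP[c span_f]].
  apply/spanP; exists c => u.
  by rewrite def_f ffunE; apply: eq_bigr => b _; rewrite yb_class_vec.
by exists c; apply/ffunP => u; rewrite ffunE span_f; apply: eq_bigr => b _; rewrite yb_class_vec.
Qed.

End ModifiedDividedPower.

Section TensorProduct.
Variables (BV BW : finType) (kV : BV -> ckind) (kW : BW -> ckind).
Variables (rV : BV -> nat) (rW : BW -> nat) (d1 d2 : nat) (R : comNzRingType).
Local Notation X := (Seqs BV d1 * Seqs BW d2)%type.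
Local Notation pair_content := (fun p : X => (content p.1, content p.2)).
Local Notation pair_cfact := (fun p : X => (cfact kV p.1 * cfact kW p.2)%N).
Local Notation pair_odd_inv := (fun p : X => (odd_inv kV rV p.1 + odd_inv kW rW p.2)%N).

Lemma yb_pair_class_vec (b : X) (p : X) :
  yb kV rV b.1 p.1 * yb kW rW b.2 p.2 = class_vec pair_content R pair_cfact pair_odd_inv b p.
Proof.
rewrite !yb_class_vec /class_vec /= xpair_eqE.
case: (content b.1 == _); case: (content b.2 == _); rewrite ?mul0r ?mulr0 //=.
rewrite natrM !exprD; ring.
Qed.

Lemma in_mGamma2P (T : tens2 R BV BW d1 d2) : in_mGamma2 kV kW rV rW T <->
  [/\ forall q, ~~ (seqok kV q.1 && seqok kW q.2) -> T q = 0,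
      forall q q', content q.1 = content q'.1 -> content q.2 = content q'.2 ->
        T q * (-1) ^+ pair_odd_inv q = T q' * (-1) ^+ pair_odd_inv q'
    & exists g : X -> R, forall q, T q = (pair_cfact q)%:R * g q].
Proof.
have ok_cls p p' : pair_content p = pair_content p' ->
    (seqok kV p.1 && seqok kW p.2) = (seqok kV p'.1 && seqok kW p'.2).
  by case=> /(seqok_content kV) -> /(seqok_content kW) ->.
have m_cls p p' : pair_content p = pair_content p' -> pair_cfact p = pair_cfact p'.
  by case=> /(cfact_content kV) -> /(cfact_content kW) ->.
have spanP := class_spanP pair_odd_inv ok_cls m_cls T.
have span_iff : in_mGamma2 kV kW rV rW T <-> class_span pair_content
    (fun p : X => seqok kV p.1 && seqok kW p.2) pair_cfact pair_odd_inv T.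
  split=> [[c def_T]|[c span_T]].
    exists (fun b => c b.1 b.2) => q; rewrite def_T ffunE pair_big /=.
    by apply: eq_bigr => b _; rewrite yb_pair_class_vec.
  exists (fun b b' => c (b, b')); apply/ffunP => q; rewrite ffunE span_T pair_big /=.
  by apply: eq_bigr => -[b b'] _; rewrite yb_pair_class_vec.
split=> [/span_iff/spanP[supp_T sign_T div_T]|[supp_T sign_T div_T]].
  by split=> // q q' eq1 eq2; apply: sign_T; rewrite /= eq1 eq2.
by apply/span_iff/spanP; split=> // q q' [eq1 eq2]; apply: sign_T.
Qed.

End TensorProduct.

Section Shuffles.
Variable d : nat.
Implicit Types (s t h : 'S_d) (S : {set 'I_d}) (c : nat).

Definition inversions (f : 'I_d -> 'I_d) : {set 'I_d * 'I_d} :=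
  [set p : 'I_d * 'I_d | (p.1 < p.2)%N && (f p.2 < f p.1)%N].

(* i.e. s^-1 is a (c, d - c)-shuffle *)
Definition block_monotone c s : Prop :=
  forall k l : 'I_d, (k < l)%N -> (s k < c)%N = (s l < c)%N -> (s k < s l)%N.

(* The position of k when S is listed before its complement, both increasingly. *)
Definition sep_index S (k : 'I_d) : nat :=
  if k \in S then #|[set j in S | (j < k)%N]|
  else (#|S| + #|[set j in ~: S | (j < k)%N]|)%N.

Lemma sep_index_ltE S k : (sep_index S k < #|S|)%N = (k \in S).
Proof.
rewrite /sep_index; case: ifP => Sk; last by rewrite ltnNge leq_addr.
apply: proper_card; apply/properP; split; first by apply/subsetP => j /setIdP[].
by exists k; rewrite // inE ltnn andbF.
Qed.

Lemma sep_index_lt S k : (sep_index S k < d)%N.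
Proof.
case: (boolP (k \in S)) => Sk.
  by rewrite -[d]card_ord (leq_trans _ (max_card S)) // sep_index_ltE.
rewrite /sep_index (negbTE Sk) -[X in (_ < X)%N](card_ord d) -(cardsC S) ltn_add2l.
apply: proper_card; apply/properP; split; first by apply/subsetP => j /setIdP[].
by exists k; rewrite ?inE ?ltnn ?andbF.
Qed.

Lemma sep_index_mono S (k l : 'I_d) :
  (k < l)%N -> (k \in S) = (l \in S) -> (sep_index S k < sep_index S l)%N.
Proof.
move=> kl Skl; rewrite /sep_index -Skl; case: ifP => Sk; rewrite ?ltn_add2l;
  apply: proper_card; apply/properP; split;
  by [apply/subsetP => j; rewrite !inE => /andP[-> /ltn_trans]; apply
     | exists k; rewrite !inE ?ltnn ?andbF ?Sk ?kl].
Qed.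

Definition sep_ord S k : 'I_d := Ordinal (sep_index_lt S k).

Lemma sep_ord_inj S : injective (sep_ord S).
Proof.
move=> k l /(congr1 val) /= eq_kl; apply: val_inj => /=.
have Skl : (k \in S) = (l \in S) by rewrite -!sep_index_ltE eq_kl.
case: (ltngtP k l) => // [kl|lk].
  by have := sep_index_mono kl Skl; rewrite eq_kl ltnn.
by have := sep_index_mono lk (esym Skl); rewrite eq_kl ltnn.
Qed.

Definition sep_perm S : 'S_d := perm (@sep_ord_inj S).

Lemma sep_permE S k : sep_perm S k = sep_index S k :> nat.
Proof. by rewrite permE. Qed.

Lemma sep_perm_ltE S k : (sep_perm S k < #|S|)%N = (k \in S).
Proof. by rewrite sep_permE sep_index_ltE. Qed.

Lemma sep_perm_monotone S : block_monotone #|S| (sep_perm S).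
Proof. by move=> k l kl; rewrite !sep_perm_ltE !sep_permE; apply: sep_index_mono. Qed.

Lemma card_perm_ltn s v : (v <= d)%N -> #|[set j | (s j < v)%N]| = v.
Proof.
move=> le_vd.
transitivity #|s @^-1: (widen_ord le_vd @: [set: 'I_v])|.
  apply: eq_card => j; rewrite !inE; apply/idP/imsetP => [sjv|[i _ ->] //=].
  by exists (Ordinal sjv); rewrite ?inE //; apply: val_inj.
rewrite card_preimset; last exact: perm_inj.
rewrite card_imset ?cardsT ?card_ord //.
by move=> i j /(congr1 val) /= /val_inj.
Qed.

Lemma block_monotone_sep_index c s : (c <= d)%N -> block_monotone c s ->
  forall k, s k = sep_index [set j | (s j < c)%N] k :> nat.
Proof.
move=> le_cd mono_s k; rewrite /sep_index inE.
rewrite -{1}(card_perm_ltn s (ltnW (ltn_ord (s k)))).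
case: ifP => skc.
  apply: eq_card => j; rewrite !inE; apply/idP/andP => [sjk|[sjc jk]]; last first.
    by apply: mono_s; rewrite // sjc skc.
  have sjc : (s j < c)%N := ltn_trans sjk skc.
  split=> //; case: (ltngtP j k) => // [kj|/val_inj jk]; last by rewrite jk ltnn in sjk.
  by have := mono_s _ _ kj; rewrite sjc skc ltnNge ltnW // => /(_ erefl).
rewrite -(cardsID [set j | (s j < c)%N]); congr (_ + _)%N.
  apply: eq_card => j; rewrite !inE; apply/andP/idP => [[] //|sjc]; split=> //.
  by rewrite (leq_trans sjc) // leqNgt skc.
apply: eq_card => j; rewrite !inE; apply/andP/andP => [[sjc sjk]|[sjc jk]]; last first.
  by split=> //; apply: mono_s; rewrite // skc (negbTE sjc).
split=> //; case: (ltngtP j k) => // [kj|/val_inj jk]; last by rewrite jk ltnn in sjk.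
by have := mono_s _ _ kj; rewrite skc (negbTE sjc) ltnNge ltnW // => /(_ erefl).
Qed.

Lemma block_monotone_inj c s t : (c <= d)%N -> block_monotone c s -> block_monotone c t ->
  (forall k, (s k < c)%N = (t k < c)%N) -> s = t.
Proof.
move=> le_cd mono_s mono_t same_blocks; apply/permP => k; apply: val_inj.
rewrite /= (block_monotone_sep_index le_cd mono_s) (block_monotone_sep_index le_cd mono_t).
by congr sep_index; apply/setP => j; rewrite !inE same_blocks.
Qed.

Lemma block_monotone1 c : block_monotone c 1.
Proof. by move=> k l kl _; rewrite !perm1. Qed.

Lemma inversions_young c t h : block_monotone c t -> young c h ->
  inversions t \subset inversions (fun k => h (t k)).
Proof.
move=> mono_t /forallP young_h; apply/subsetP => -[k l].
rewrite !inE /= => /andP[kl tlk]; rewrite kl /=.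
have [/eqP hk /eqP hl] := (young_h (t k), young_h (t l)).
case tkc: (t k < c)%N; case tlc: (t l < c)%N.
- by have := mono_t _ _ kl; rewrite tkc tlc ltnNge ltnW // => /(_ erefl).
- by move: tlk; rewrite ltnNge (leq_trans (ltnW tkc)) // leqNgt tlc.
- by apply: leq_trans (_ : c <= _)%N; rewrite ?hl ?tlc // leqNgt hk tkc.
- by have := mono_t _ _ kl; rewrite tkc tlc ltnNge ltnW // => /(_ erefl).
Qed.

Lemma shortest_repP c s : (c <= d)%N -> shortest_rep c s <-> block_monotone c s.
Proof.
move=> le_cd; split=> [shortest_s k l kl same_block|mono_s]; last first.
  apply/forallP => h; apply/implyP => young_h.
  exact/subset_leq_card/(inversions_young mono_s young_h).
case: (ltngtP (s k) (s l)) => // [slk|/val_inj/perm_inj eq_kl]; last first.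
  by rewrite eq_kl ltnn in kl.
pose S := [set j | (s j < c)%N]; pose t := sep_perm S.
have card_S : #|S| = c by rewrite card_perm_ltn.
have mono_t : block_monotone c t by rewrite -card_S; apply: sep_perm_monotone.
have t_s k' : ((s^-1 * t)%g (s k') = t k') by rewrite permM permK.
have young_h : young c (s^-1 * t)%g.
  by apply/forallP => j; rewrite -(permKV s j) t_s -{1}card_S sep_perm_ltE inE.
have := implyP (forallP shortest_s _) young_h; rewrite leqNgt => /negbTE <-.
rewrite [perm_length (fun _ => _)](_ : _ = #|inversions t|); last first.
  by apply: eq_card => p; rewrite !inE /= !t_s.
apply: proper_card; apply/properP; split.
  have young_hV : young c (s^-1 * t)%g^-1.
    apply/forallP => j; have /forallP/(_ (((s^-1 * t)^-1)%g j)) := young_h.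
    by rewrite permKV eq_sym.
  apply: subset_trans (inversions_young mono_t young_hV) _.
  by apply/subsetP => p; rewrite !inE -!t_s !permK.
exists (k, l); rewrite !inE /= ?kl ?slk //= -leqNgt ltnW //.
by apply: mono_t; rewrite // -card_S !sep_perm_ltE !inE.
Qed.

End Shuffles.

Definition is_inl (T1 T2 : Type) (x : T1 + T2) : bool := if x is inl _ then true else false.

(* An order on B_V + B_W inducing the orders rV and rW and placing B_V first. *)
Definition sum_rank (BV BW : finType) (rV : BV -> nat) (rW : BW -> nat) (x : BV + BW) : nat :=
  match x with inl a => rV a | inr b => ((\max_a rV a).+1 + rW b)%N end.

Lemma sum_rank_inl_lt (BV BW : finType) (rV : BV -> nat) (rW : BW -> nat) a b :
  (sum_rank rV rW (inl a) < sum_rank rV rW (inr b))%N.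
Proof. by rewrite /= addSn ltnS (leq_trans (leq_bigmax a)) ?leq_addr. Qed.

Section Concat.
Variables (BV BW : finType) (d : nat) (d1 : 'I_d.+1).
Implicit Types (qV : Seqs BV d1) (qW : Seqs BW (d - d1)).

Definition lpos (i : 'I_d1) : 'I_d := cast_ord (dsplit d1) (lshift (d - d1) i).
Definition rpos (j : 'I_(d - d1)) : 'I_d := cast_ord (dsplit d1) (rshift d1 j).

Lemma concat_lpos qV qW i : concat qV qW (lpos i) = inl (qV i).
Proof. by rewrite ffunE cast_ordK -[lshift _ _]/(unsplit (inl i)) unsplitK. Qed.

Lemma concat_rpos qV qW j : concat qV qW (rpos j) = inr (qW j).
Proof. by rewrite ffunE cast_ordK -[rshift _ _]/(unsplit (inr j)) unsplitK. Qed.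

Lemma lpos_or_rpos (k : 'I_d) : (exists i, k = lpos i) \/ (exists j, k = rpos j).
Proof.
by case: (splitP (cast_ord (esym (dsplit d1)) k)) => [i|j] eq_k; [left; exists i|right; exists j];
  apply: val_inj; rewrite /= -eq_k.
Qed.

Lemma big_lpos_rpos (R : Type) (idx : R) (op : Monoid.com_law idx) (F : 'I_d -> R) :
  \big[op/idx]_k F k = op (\big[op/idx]_i F (lpos i)) (\big[op/idx]_j F (rpos j)).
Proof.
rewrite (reindex (cast_ord (dsplit d1))) /= ?big_split_ord //.
by exists (cast_ord (esym (dsplit d1))) => k _; rewrite ?cast_ordK ?cast_ordKV.
Qed.

Lemma concat_inj qV qV' qW qW' : concat qV qW = concat qV' qW' -> qV = qV' /\ qW = qW'.
Proof.
move=> eq_cc; split; apply/ffunP => i.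
  by have := congr1 (fun u : Seqs _ d => u (lpos i)) eq_cc; rewrite /= !concat_lpos => -[].
by have := congr1 (fun u : Seqs _ d => u (rpos i)) eq_cc; rewrite /= !concat_rpos => -[].
Qed.

Lemma is_inl_concat qV qW k : is_inl (concat qV qW k) = (k < d1)%N.
Proof.
case: (lpos_or_rpos k) => -[? ->]; rewrite ?concat_lpos ?concat_rpos /=.
  by rewrite ltn_ord.
by rewrite ltnNge leq_addr.
Qed.

Lemma occ_concat qV qW P :
  occ (concat qV qW) P = (occ qV (fun x => P (inl x)) + occ qW (fun y => P (inr y)))%N.
Proof.
rewrite /occ !cards_sum_nat big_lpos_rpos.
by congr (_ + _)%N; apply: eq_bigr => i _; rewrite ?concat_lpos ?concat_rpos.
Qed.

Lemma content_concat_inl qV qW x : content (concat qV qW) (inl x) = content qV x.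
Proof.
rewrite !ffunE; apply: etrans (occ_concat qV qW (pred1 (inl x))) _.
by rewrite [X in (_ + X)%N]cards_sum_nat big1 ?addn0.
Qed.

Lemma content_concat_inr qV qW y : content (concat qV qW) (inr y) = content qW y.
Proof.
rewrite !ffunE; apply: etrans (occ_concat qV qW (pred1 (inr y))) _.
by rewrite [X in (X + _)%N]cards_sum_nat big1.
Qed.

Lemma eq_content_concat qV qV' qW qW' :
  (content (concat qV qW) == content (concat qV' qW')) =
  (content qV == content qV') && (content qW == content qW').
Proof.
apply/eqP/andP => [eq_cc|[/eqP eq1 /eqP eq2]].
  by split; apply/eqP/ffunP => x;
    [rewrite -(content_concat_inl qV qW) -(content_concat_inl qV' qW') eq_cc
    |rewrite -(content_concat_inr qV qW) -(content_concat_inr qV' qW') eq_cc].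
by apply/ffunP => -[x|y]; rewrite ?content_concat_inl ?content_concat_inr ?eq1 ?eq2.
Qed.

Variables (kV : BV -> ckind) (kW : BW -> ckind).
Local Notation kU := (sum_kind kV kW).

Lemma seqok_concat qV qW : seqok kU (concat qV qW) = seqok kV qV && seqok kW qW.
Proof.
rewrite !seqokE; apply/forallP/andP => [ok_cc|[/forallP ok1 /forallP ok2] [x|y] /=].
- split; apply/forallP => x; [have := ok_cc (inl x) | have := ok_cc (inr x)];
    by rewrite ?content_concat_inl ?content_concat_inr.
- by rewrite content_concat_inl ok1.
- by rewrite content_concat_inr ok2.
Qed.

Lemma cfact_concat qV qW : cfact kU (concat qV qW) = (cfact kV qV * cfact kW qW)%N.
Proof.
rewrite /cfact big_sumType /=; congr (_ * _)%N; apply: eq_bigr => x _.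
  by have := content_concat_inl qV qW x; rewrite !ffunE => ->.
by have := content_concat_inr qV qW x; rewrite !ffunE => ->.
Qed.

Lemma parity_concat qV qW :
  seq_parity kU (concat qV qW) = seq_parity kV qV (+) seq_parity kW qW.
Proof. by rewrite /seq_parity -oddD -(occ_concat _ _ (fun x => is_odd (kU x))). Qed.

Variables (rV : BV -> nat) (rW : BW -> nat).

Lemma odd_inv_concat qV qW :
  odd_inv kU (sum_rank rV rW) (concat qV qW) = (odd_inv kV rV qV + odd_inv kW rW qW)%N.
Proof.
rewrite !odd_invE big_lpos_rpos; congr (_ + _)%N.
  rewrite -[RHS]addn0; under eq_bigr do rewrite big_lpos_rpos.
  rewrite big_split /=; congr (_ + _)%N.
    by apply: eq_bigr => i _; apply: eq_bigr => i' _; rewrite !concat_lpos.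
  apply: big1 => i _; apply: big1 => j _; rewrite concat_lpos concat_rpos /=.
  by rewrite (leq_gtF (ltnW (sum_rank_inl_lt rV rW _ _))) !andbF.
rewrite -[RHS]add0n; under eq_bigr do rewrite big_lpos_rpos.
rewrite big_split /=; congr (_ + _)%N.
  apply: big1 => j _; apply: big1 => i _.
  by rewrite /= ltnNge (leq_trans (ltnW (ltn_ord i))) ?leq_addr.
by apply: eq_bigr => j _; apply: eq_bigr => j' _; rewrite !concat_rpos /= !ltn_add2l.
Qed.

End Concat.

Lemma sum_rank_inj (BV BW : finType) (rV : BV -> nat) (rW : BW -> nat) :
  injective rV -> injective rW -> injective (sum_rank rV rW).
Proof.
move=> rV_inj rW_inj [a|b] [a'|b'] /= eq_rk.
- by rewrite (rV_inj _ _ eq_rk).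
- by have := sum_rank_inl_lt rV rW a b'; rewrite /= eq_rk ltnn.
- by have := sum_rank_inl_lt rV rW a' b; rewrite /= eq_rk ltnn.
- by congr inr; apply/rW_inj/eqP; rewrite -(eqn_add2l (\max_a rV a).+1) eq_rk.
Qed.

Section DirectSum.
Variables (BV BW : finType) (kV : BV -> ckind) (kW : BW -> ckind) (d : nat).
Local Notation kU := (sum_kind kV kW).
Local Notation Q d1 := (Seqs BV d1 * Seqs BW (d - d1))%type.
Local Notation cc q := (concat q.1 q.2).
Local Notation shuffle q s := [ffun k => concat q.1 q.2 (s k)].

Lemma emb_concat (R : comNzRingType) (d1 : 'I_d.+1) (T : tens2 R BV BW d1 (d - d1)) (q : Q d1) :
  emb T (cc q) = T q.
Proof.
rewrite ffunE (bigD1 q) //= eqxx mulr1 big1 ?addr0 // => q' ne_q'.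
case: eqP => [/concat_inj[eq1 eq2]|]; last by rewrite mulr0.
by case/eqP: ne_q'; rewrite [q]surjective_pairing [q']surjective_pairing eq1 eq2.
Qed.

Lemma shuffle_block_size (d1 d1' : 'I_d.+1) (q : Q d1) (q' : Q d1') (s s' : 'S_d) :
  seq_sim (shuffle q s) (shuffle q' s') -> d1 = d1'.
Proof.
have occ_inl (c : 'I_d.+1) (p : Q c) (t : 'S_d) : occ (shuffle p t) (@is_inl BV BW) = c.
  rewrite occ_perm occ_concat /occ !cards_sum_nat /= [X in (_ + X)%N]big1 // addn0.
  by rewrite sum1_card card_ord.
by move/(occ_sim (@is_inl BV BW)); rewrite !occ_inl => /val_inj.
Qed.

Lemma shuffle_perm_uniq (d1 : 'I_d.+1) (q q' : Q d1) (s s' : 'S_d) :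
  shortest_rep d1 s -> shortest_rep d1 s' -> shuffle q s = shuffle q' s' -> s = s'.
Proof.
have le_d1 : (d1 <= d)%N by rewrite -ltnS.
move=> /(shortest_repP _ le_d1) mono_s /(shortest_repP _ le_d1) mono_s' eq_sh.
apply: (block_monotone_inj le_d1 mono_s mono_s') => k.
rewrite -(is_inl_concat q.1 q.2) -(is_inl_concat q'.1 q'.2).
by move/ffunP/(_ k): eq_sh; rewrite [LHS]ffunE [RHS]ffunE => ->.
Qed.

Lemma shuffle_decomposition (u : Seqs (BV + BW)%type d) :
  exists (d1 : 'I_d.+1) (q : Q d1) (s : 'S_d), shortest_rep d1 s /\ u = shuffle q s.
Proof.
pose S := [set k | is_inl (u k)].
have card_S : (#|S| < d.+1)%N by rewrite ltnS -[X in (_ <= X)%N](card_ord d) max_card.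
pose d1 : 'I_d.+1 := Ordinal card_S; pose t := sep_perm S.
have inl_pos (i : 'I_d1) : exists x, u ((t^-1)%g (lpos i)) = inl x.
  have : (t ((t^-1)%g (lpos i)) < #|S|)%N by rewrite permKV /=.
  by rewrite sep_perm_ltE inE; case: (u _) => [x|] // _; exists x.
have inr_pos (j : 'I_(d - d1)) : exists y, u ((t^-1)%g (rpos j)) = inr y.
  have : ~~ (t ((t^-1)%g (rpos j)) < #|S|)%N by rewrite permKV /= -leqNgt leq_addr.
  by rewrite sep_perm_ltE inE; case: (u _) => [|y] // _; exists y.
have [f1 def_f1] := fin_all_exists inl_pos; have [f2 def_f2] := fin_all_exists inr_pos.
exists d1, ([ffun i => f1 i], [ffun j => f2 j]), t; split.
  by apply/(shortest_repP _ (card_S : (d1 <= d)%N))/sep_perm_monotone.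
apply/ffunP => k; rewrite ffunE /=; case: (lpos_or_rpos d1 (t k)) => -[i eq_tk];
  by rewrite eq_tk ?concat_lpos ?concat_rpos ffunE -?def_f1 -?def_f2 -eq_tk permK.
Qed.

Variable R : comNzRingType.
Implicit Types F G : forall d1 : 'I_d.+1, tens2 R BV BW d1 (d - d1).

Lemma Phi_shuffle F (d1 : 'I_d.+1) (q : Q d1) (s : 'S_d) : shortest_rep d1 s ->
  Phi kU F (shuffle q s) = (-1) ^+ perm_sign_exp kU s (cc q) * F d1 q.
Proof.
move=> shortest_s; have unshuffle (c : 'I_d.+1) (p : Q c) (t : 'S_d) :
    [ffun k => shuffle q s ((t^-1)%g k)] = cc p -> shuffle q s = shuffle p t.
  by move=> <-; apply/ffunP => k; rewrite !ffunE permK.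
rewrite ffunE (bigD1 d1) //= big1 ?addr0 => [|c ne_c]; last first.
  rewrite ffunE big1 // => t _; rewrite tactE ffunE big1 ?mul0r // => p _.
  case: eqP => [/unshuffle eq_sh|]; last by rewrite mulr0.
  case/eqP: ne_c; apply: (shuffle_block_size (q := p) (s := t) (q' := q) (s' := s)).
  by rewrite -eq_sh seq_simE.
rewrite ffunE (bigD1 s) //= big1 ?addr0 => [|t /andP[shortest_t ne_t]]; last first.
  rewrite tactE ffunE big1 ?mul0r // => p _.
  case: eqP => [/unshuffle eq_sh|]; last by rewrite mulr0.
  by case/eqP: ne_t; rewrite (shuffle_perm_uniq shortest_s shortest_t eq_sh).
rewrite tactE (_ : [ffun k => _] = cc q) ?emb_concat 1?mulrC //.
by apply/ffunP => k; rewrite !ffunE permKV.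
Qed.

Lemma Phi_concat F (d1 : 'I_d.+1) (q : Q d1) : Phi kU F (cc q) = F d1 q.
Proof.
have le_d1 : (d1 <= d)%N by rewrite -ltnS.
have shortest1 : shortest_rep d1 (1%g : 'S_d).
  by apply/(shortest_repP _ le_d1); apply: block_monotone1.
have shuffle1 : shuffle q (1%g : 'S_d) = cc q by apply/ffunP => k; rewrite ffunE perm1.
have pse1 : perm_sign_exp kU 1%g (cc q) = 0%N.
  rewrite /perm_sign_exp cards_sum_nat big1 // => p _.
  by rewrite invg1 !perm1; case: ltngtP.
by have := Phi_shuffle F q shortest1; rewrite shuffle1 pse1 mul1r.
Qed.

Lemma Phi_inj F G : Phi kU F = Phi kU G -> forall d1, F d1 = G d1.
Proof. by move=> eq_Phi d1; apply/ffunP => q; rewrite -!Phi_concat eq_Phi. Qed.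

Lemma Phi_homog F p : (forall d1, homog2 kV kW p (F d1)) -> homog kU p (Phi kU F).
Proof.
move=> homog_F u; have [d1 [q [s [shortest_s ->]]]] := shuffle_decomposition u.
rewrite Phi_shuffle // seq_parity_perm parity_concat => nz_Fq; apply: homog_F.
by apply: contraNneq nz_Fq => ->; rewrite mulr0.
Qed.

Variables (rV : BV -> nat) (rW : BW -> nat) (rU : (BV + BW)%type -> nat).
Hypotheses (rV_inj : injective rV) (rW_inj : injective rW) (rU_inj : injective rU).
Local Notation rS := (sum_rank rV rW).

Lemma Phi_twisted F : (forall d1, in_mGamma2 kV kW rV rW (F d1)) ->
  forall u u', content u = content u' ->
  Phi kU F u * (-1) ^+ odd_inv kU rU u = Phi kU F u' * (-1) ^+ odd_inv kU rU u'.
Proof.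
move=> adm_F u u'; have [d1 [q [s [shortest_s ->]]]] := shuffle_decomposition u.
have [d1' [q' [s' [shortest_s' ->]]]] := shuffle_decomposition u' => eq_u.
have eq_d1 : d1 = d1'.
  apply: (shuffle_block_size (q := q) (q' := q') (s := s) (s' := s')).
  by rewrite seq_simE eq_u.
subst d1'; rewrite !content_perm in eq_u.
have [supp_F sign_F _] := (in_mGamma2P kV kW rV rW (F d1)).1 (adm_F d1).
have ok_q' : seqok kU (cc q') = seqok kU (cc q) by rewrite (seqok_content _ eq_u).
case ok_q: (seqok kU (cc q)) in ok_q' *.
  rewrite ((twisted_permE s _ _ rU_inj ok_q).2 (Phi_shuffle F q shortest_s)).
  rewrite ((twisted_permE s' _ _ rU_inj ok_q').2 (Phi_shuffle F q' shortest_s')).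
  apply: (twisted_rank_change (rk := rS)) => //; first exact: sum_rank_inj.
  - by rewrite seqok_concat; apply: supp_F.
  - by rewrite seqok_concat; apply: supp_F.
  - move/eqP: eq_u; rewrite eq_content_concat => /andP[/eqP eq1 /eqP eq2].
    by rewrite !odd_inv_concat; apply: sign_F.
by rewrite !Phi_shuffle // !supp_F ?mulr0 ?mul0r // -seqok_concat ?ok_q ?ok_q'.
Qed.

Lemma Phi_in_mGamma F :
  (forall d1, in_mGamma2 kV kW rV rW (F d1)) -> in_mGamma kU rU (Phi kU F).
Proof.
move=> adm_F; have spec_F d1 := (in_mGamma2P kV kW rV rW (F d1)).1 (adm_F d1).
apply/in_mGammaP; split; [|exact: Phi_twisted adm_F|].
- move=> u; have [d1 [q [s [shortest_s ->]]]] := shuffle_decomposition u.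
  rewrite (seqok_content _ (content_perm _ _)) seqok_concat Phi_shuffle // => not_ok.
  by have [-> // _ _] := spec_F d1; rewrite mulr0.
have [G div_G] : exists G : forall d1 : 'I_d.+1, tens2 R BV BW d1 (d - d1),
    forall d1 q, F d1 q = (cfact kV q.1 * cfact kW q.2)%:R * G d1 q.
  apply: (@fin_all_exists _ (fun d1 : 'I_d.+1 => tens2 R BV BW d1 (d - d1))
    (fun d1 g => forall q, F d1 q = (cfact kV q.1 * cfact kW q.2)%:R * g q)) => d1.
  by have [_ _ [g div_g]] := spec_F d1; exists [ffun q => g q] => q; rewrite ffunE.
exists (Phi kU G) => u; have [d1 [q [s [shortest_s ->]]]] := shuffle_decomposition u.
rewrite !Phi_shuffle // div_G (cfact_content _ (content_perm _ _)) cfact_concat.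
by rewrite mulrCA.
Qed.

Lemma Phi_surj (f : tens R (BV + BW)%type d) : in_mGamma kU rU f ->
  exists2 F, (forall d1, in_mGamma2 kV kW rV rW (F d1)) & Phi kU F = f.
Proof.
case/in_mGammaP => supp_f sign_f [g div_f].
exists (fun d1 => [ffun q => f (cc q)]) => [d1|].
  apply/in_mGamma2P; split=> [q|q q' eq1 eq2|].
  - by rewrite ffunE -seqok_concat; apply: supp_f.
  - have eq_cc : content (cc q) = content (cc q').
      by apply/eqP; rewrite eq_content_concat eq1 eq2 !eqxx.
    rewrite !ffunE -!odd_inv_concat.
    apply: (twisted_rank_change (rk := rU)) => //; first exact: sum_rank_inj.
    + exact: supp_f.
    + exact: supp_f.
    + exact: sign_f.
  - by exists [ffun q => g (cc q)] => q; rewrite !ffunE div_f cfact_concat.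
apply/ffunP => u; have [d1 [q [s [shortest_s ->]]]] := shuffle_decomposition u.
rewrite Phi_shuffle // ffunE; case ok_q: (seqok kU (cc q)); last first.
  by rewrite !supp_f ?mulr0 ?ok_q // (seqok_content kU (content_perm (cc q) s)) ok_q.
have := sign_f _ _ (content_perm (cc q) s).
by move/(twisted_permE s _ _ rU_inj ok_q).
Qed.

End DirectSum.

Theorem lemma3p5 (R : idomainType)
  (R_pid : principal_ideal_domain R) (R_char0 : char0 R)
  (BV BW : finType) (kV : BV -> ckind) (kW : BW -> ckind)
  (rV : BV -> nat) (rW : BW -> nat) (rU : (BV + BW)%type -> nat)
  (rV_inj : injective rV) (rW_inj : injective rW) (rU_inj : injective rU)
  (d : nat) :
  let kU := sum_kind kV kW in
  let adm (F : forall d1 : 'I_d.+1, tens2 R BV BW d1 (d - d1)) :=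
    forall d1 : 'I_d.+1, in_mGamma2 kV kW rV rW (F d1) in
  [/\ (* the map lands in ~Gamma^d (V ⊕ W) *)
      forall F, adm F -> in_mGamma kU rU (Phi kU F),
      (* it is injective *)
      forall F G, adm F -> adm G -> Phi kU F = Phi kU G ->
        forall d1 : 'I_d.+1, F d1 = G d1,
      (* it is surjective onto ~Gamma^d (V ⊕ W) *)
      forall f : tens R (BV + BW)%type d, in_mGamma kU rU f ->
        exists2 F, adm F & Phi kU F = f
    & (* it is even (preserves the Z/2-grading) *)
      forall (F : forall d1 : 'I_d.+1, tens2 R BV BW d1 (d - d1)) (p : bool),
        (forall d1 : 'I_d.+1, homog2 kV kW p (F d1)) -> homog kU p (Phi kU F)].
Proof.
move=> kU adm; split.
- exact: Phi_in_mGamma.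
- by move=> F G _ _; apply: Phi_inj.
- exact: Phi_surj.
- exact: Phi_homog.
Qed.
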